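(* Let $H$ be an $r$-graph and $T$ a subgraph of $H$. Then for every $n$, $C_r(n,H)\ge C_r(n,T)^{\frac{1}{|V(H)|+1}}$.
   Context: An $r$-graph is an $r$-uniform hypergraph; $K_n^{(r)}$ is the complete $r$-graph on $n$ vertices. A copy of an $r$-graph $H$ in $K_n^{(r)}$ is a subhypergraph isomorphic to $H$ (its vertex set is the image of all of $V(H)$). An $(n,r,H)$-local coloring with $k$ colors is a family of edge-colorings $f_v:E(K_n^{(r)})\to[k]$, one per vertex $v$, such that for every copy $T$ of $H$ there is $u\in V(T)$ with $f_u$ injective on $E(T)$. $C_r(n,H)$ is the minimum such $k$. *)

From mathcomp Require Import all_boot all_order.
From mathcomp Require Import boolp.


Definition is_rgraph (r : nat) {V : finType} (VS : {set V}) (E : {set {set V}}) :=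
  forall e, e \in E -> e \subset VS /\ #|e| = r.

Definition is_subgraph {V : finType} (VT VH : {set V}) (ET EH : {set {set V}}) :=
  VT \subset VH /\ ET \subset EH.

(* An (n, r, H)-local colouring with k colours: one edge colouring
   f u : E(K_n^(r)) -> [k] per vertex u of K_n (edges of K_n^(r) are the
   r-subsets of 'I_n; values on other sets are irrelevant).  Copies of H are
   the images of H under maps phi injective on V(H): vertex set phi @: VH,
   edge set { phi @: e | e in EH }. *)
Definition local_coloring (r n k : nat) {V : finType} (VS : {set V})
    (E : {set {set V}}) (f : 'I_n -> {set 'I_n} -> nat) : Prop :=
  (forall (u : 'I_n) (e : {set 'I_n}), #|e| = r -> f u e < k) /\
  (forall phi : V -> 'I_n, {in VS &, injective phi} ->
     exists2 u, u \in phi @: VS &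
       {in (fun e : {set V} => phi @: e) @: E &, injective (f u)}).

Definition has_local_coloring (r n : nat) {V : finType} (VS : {set V})
    (E : {set {set V}}) (k : nat) : bool :=
  `[< exists f, local_coloring r n k VS E f >].

(* C_r(n, H): the least number of colours of an (n, r, H)-local colouring
   (0 as a junk value if none exists, which only happens when V(H) is empty). *)
Definition Cr (r n : nat) {V : finType} (VS : {set V}) (E : {set {set V}}) : nat :=
  match pselect (exists k, has_local_coloring r n VS E k) with
  | left h => ex_minn h
  | right _ => 0
  end.

From mathcomp Require Import all_boot all_order.
From mathcomp Require Import boolp.

(* Let f be a local colouring for copies of H with k colours and m = |V(H)|.
   Vertex v colours an edge e by the base-k number with digits
   f_v(e), f_0(e), ..., f_(m-1)(e).  A copy phi of T extends to a copy of H
   whose new vertices lie in {0, ..., m-1}; some vertex u of that copy has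
   f_u injective on its edges, which contain those of the copy of T.  Either
   u is a vertex of the copy of T (read digit 0 at u) or u < m (read digit
   u+1 at any vertex of the copy of T). *)

Lemma sum_digits_lt {k N} {a : nat -> nat} :
  (forall i, i < N -> a i < k) -> \sum_(i < N) a i * k ^ i < k ^ N.
Proof.
elim: N => [|N IHN] a_lt; first by rewrite big_ord0.
rewrite big_ord_recr /= expnS.
have low_lt := IHN (fun i lt_iN => a_lt i (ltnW lt_iN)).
have top_le : a N * k ^ N + k ^ N <= k * k ^ N.
  by rewrite addnC -mulSn leq_mul2r a_lt ?orbT.
by apply: leq_trans top_le; rewrite addnC ltn_add2l.
Qed.

Lemma sum_digits_inj {k N} {a b : nat -> nat} :
  (forall i, i < N -> a i < k) -> (forall i, i < N -> b i < k) ->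
  \sum_(i < N) a i * k ^ i = \sum_(i < N) b i * k ^ i ->
  forall i, i < N -> a i = b i.
Proof.
elim: N => [//|N IHN] a_lt b_lt; rewrite !big_ord_recr /=.
have a_lt' i (lt_iN : i < N) := a_lt i (ltnW lt_iN).
have b_lt' i (lt_iN : i < N) := b_lt i (ltnW lt_iN).
have kN_gt0 : 0 < k ^ N by rewrite expn_gt0 (leq_ltn_trans _ (a_lt N _)).
move: (sum_digits_lt a_lt') (sum_digits_lt b_lt').
set sa := \sum_(i < N) _; set sb := \sum_(i < N) _ => sa_lt sb_lt eq_sum.
have eq_low : sa = sb.
  have := congr1 (modn^~ (k ^ N)) eq_sum.
  by rewrite addnC [sb + _]addnC !modnMDl !modn_small.
move: eq_sum; rewrite eq_low => /addnI /eqP; rewrite eqn_pmul2r // => /eqP eq_top.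
move=> i; rewrite ltnS leq_eqVlt => /predU1P [-> //|lt_iN].
exact: IHN.
Qed.

Lemma injective_extension {V U : finType} {A B : {set V}} {W : {set U}}
    {phi : V -> U} :
  A \subset B -> {in A &, injective phi} -> #|B :\: A| <= #|W :\: phi @: A| ->
  exists psi : V -> U, [/\ {in B &, injective psi}, {in A, psi =1 phi} &
    {in B :\: A, forall x, psi x \in W :\: phi @: A}].
Proof.
move=> sAB phi_inj card_le.
set D := B :\: A; set F := W :\: phi @: A.
pose fresh x := nth (phi x) (enum F) (index x (enum D)).
have index_lt x : x \in D -> index x (enum D) < size (enum F).
  by move=> xD; rewrite -cardE (leq_trans _ card_le) // cardE index_mem mem_enum.
have fresh_in x : x \in D -> fresh x \in F.
  by move=> xD; rewrite -mem_enum mem_nth ?index_lt.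
have fresh_inj : {in D &, injective fresh}.
  move=> x y xD yD /eqP; rewrite /fresh.
  rewrite [nth (phi y) _ _](set_nth_default (phi x)) ?index_lt //.
  rewrite nth_uniq ?enum_uniq ?index_lt //.
  move=> /eqP eq_idx; have xD' : x \in enum D by rewrite mem_enum.
  by rewrite -(nth_index x xD') eq_idx nth_index ?mem_enum.
exists (fun x => if x \in A then phi x else fresh x); split.
- move=> x y xB yB; case: ifP => xA; case: ifP => yA.
  + exact: phi_inj.
  + move=> eq_xy; have /setDP[_ /negP[]] : fresh y \in F.
      by apply: fresh_in; rewrite inE yA.
    by rewrite -eq_xy imset_f.
  + move=> eq_xy; have /setDP[_ /negP[]] : fresh x \in F.
      by apply: fresh_in; rewrite inE xA.
    by rewrite eq_xy imset_f.
  + by apply: fresh_inj; rewrite inE ?xA ?yA.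
- by move=> x /= ->.
- by move=> x xD /=; rewrite (negbTE (setDP xD).2) fresh_in.
Qed.

Lemma has_local_coloring_enum_rank r n {V : finType} (VS : {set V})
    (E : {set {set V}}) :
  VS != set0 -> has_local_coloring r n VS E #|{set 'I_n}|.
Proof.
case/set0Pn=> x xS; apply/asboolP; exists (fun _ e => val (enum_rank e)); split.
- by move=> u e _; apply: ltn_ord.
- move=> phi _; exists (phi x); first exact: imset_f.
  by move=> e1 e2 _ _ /val_inj /enum_rank_inj.
Qed.

Lemma Cr_local_coloring r n {V : finType} (VS : {set V}) (E : {set {set V}}) :
  VS != set0 -> exists f, local_coloring r n (Cr r n VS E) VS E f.
Proof.
move=> VS0; rewrite /Cr; case: pselect => [ex_k|[]].
  by case: ex_minnP => k /asboolP.
by exists #|{set 'I_n}|; apply: has_local_coloring_enum_rank.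
Qed.

Lemma Cr_min r n {V : finType} (VS : {set V}) (E : {set {set V}}) k :
  has_local_coloring r n VS E k -> Cr r n VS E <= k.
Proof.
move=> col_k; rewrite /Cr; case: pselect => [ex_k|[]]; last by exists k.
by case: ex_minnP => m _; apply.
Qed.

Section StackedColoring.

Context {n : nat}.
Variables (k m : nat) (f : 'I_n -> {set 'I_n} -> nat).

Definition stack_vertex (v : 'I_n) (i : nat) : 'I_n :=
  if i is j.+1 then insubd v j else v.

Definition stacked_coloring (v : 'I_n) (e : {set 'I_n}) : nat :=
  \sum_(i < m.+1) f (stack_vertex v i) e * k ^ i.

Lemma stack_vertexS v (u : 'I_n) : stack_vertex v u.+1 = u.
Proof. by apply: val_inj; rewrite /= val_insubd ltn_ord. Qed.

Lemma stacked_coloring_lt v e :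
  (forall u, f u e < k) -> stacked_coloring v e < k ^ m.+1.
Proof.
by move=> f_lt; apply: (sum_digits_lt (fun i _ => f_lt (stack_vertex v i))).
Qed.

Lemma stacked_coloring_inj (S : {set {set 'I_n}}) v i :
  (forall u e, e \in S -> f u e < k) -> i < m.+1 ->
  {in S &, injective (f (stack_vertex v i))} ->
  {in S &, injective (stacked_coloring v)}.
Proof.
move=> f_lt lt_im fi_inj e1 e2 e1S e2S eq12; apply: fi_inj => //.
have digits_lt e : e \in S -> forall j, j < m.+1 -> f (stack_vertex v j) e < k.
  by move=> eS j _; apply: f_lt.
exact: (sum_digits_inj (digits_lt e1 e1S) (digits_lt e2 e2S) eq12 i lt_im).
Qed.

End StackedColoring.

Lemma copy_edges_subset {V U : finType} {VT : {set V}} {ET EH : {set {set V}}}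
    {phi psi : V -> U} :
  (forall e, e \in ET -> e \subset VT) -> ET \subset EH -> {in VT, psi =1 phi} ->
  (fun e : {set V} => phi @: e) @: ET \subset (fun e : {set V} => psi @: e) @: EH.
Proof.
move=> ET_in_VT sE psi_phi; apply/subsetP => _ /imsetP[e eT ->].
have eVT := ET_in_VT e eT.
rewrite -(@eq_in_imset _ _ psi) => [|x xe]; first by rewrite imset_f ?(subsetP sE).
by rewrite psi_phi ?(subsetP eVT).
Qed.

Lemma card_ord_ltn n m : m <= n -> #|[set i : 'I_n | i < m]| = m.
Proof.
move=> le_mn; have widen_inj : injective (widen_ord le_mn).
  by move=> i j /(congr1 val) /= /val_inj.
rewrite -[RHS]card_ord -(card_imset _ widen_inj); apply: eq_card => w.
rewrite inE; apply/idP/imsetP => [lt_wm|[i _ ->]]; last exact: (ltn_ord i).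
by exists (Ordinal lt_wm) => //; apply: val_inj.
Qed.

Lemma local_coloring_stacked r n k (V : finType) (VH VT : {set V})
    (EH ET : {set {set V}}) (f : 'I_n -> {set 'I_n} -> nat) :
  is_rgraph r VT ET -> is_subgraph VT VH ET EH -> VT != set0 -> #|VH| <= n ->
  local_coloring r n k VH EH f ->
  local_coloring r n (k ^ #|VH|.+1) VT ET (stacked_coloring k #|VH| f).
Proof.
set m := #|VH|.
move=> rT [sTH sE] /set0Pn[x0 x0T] le_mn [f_lt f_loc].
split=> [u e /f_lt f_e_lt|phi phi_inj]; first exact: stacked_coloring_lt.
set W := [set w : 'I_n | w < m].
have card_fresh : #|VH :\: VT| <= #|W :\: phi @: VT|.
  rewrite cardsDS // cardsD card_ord_ltn // -(card_in_imset phi_inj).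
  by rewrite leq_sub2l // subset_leq_card ?subsetIr.
have [psi [psi_inj psi_phi psi_fresh]] := injective_extension sTH phi_inj card_fresh.
have [u0 u0_psi u0_inj] := f_loc psi psi_inj.
have [v vT [i lt_im v_i]] : exists2 v, v \in phi @: VT &
    exists2 i, i < m.+1 & stack_vertex v i = u0.
  have [u0T|u0N] := boolP (u0 \in phi @: VT); first by exists u0 => //; exists 0.
  exists (phi x0); first exact: imset_f.
  case/imsetP: u0_psi => x xH u0_x.
  have xN : x \in VH :\: VT.
    by rewrite inE xH andbT; apply: contra u0N => xT; rewrite u0_x psi_phi ?imset_f.
  have := psi_fresh x xN; rewrite -u0_x !inE => /andP[_ lt_u0m].
  by exists u0.+1; rewrite ?stack_vertexS.
have edges_in_VT e : e \in ET -> e \subset VT by case/rT.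
exists v => //; apply: (@stacked_coloring_inj _ k m f _ v i) => //.
- move=> u _ /imsetP[e eT ->]; apply: f_lt; have [eVT <-] := rT e eT.
  exact: card_in_imset (sub_in2 (subsetP eVT) phi_inj).
- rewrite v_i; apply: sub_in2 u0_inj.
  by apply/subsetP; apply: copy_edges_subset edges_in_VT sE psi_phi.
Qed.

Theorem theorem12 (r n : nat) (V : finType) (VH VT : {set V})
    (EH ET : {set {set V}}) :
  is_rgraph r VH EH -> is_rgraph r VT ET -> is_subgraph VT VH ET EH ->
  VT != set0 -> #|VH| <= n ->
  Cr r n VT ET <= Cr r n VH EH ^ (#|VH|.+1).
Proof.
move=> _ rT sub_TH VT0 le_Hn.
have VH0 : VH != set0.
  by apply: contraNneq VT0 => VH_0; rewrite -subset0 -VH_0 sub_TH.1.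
have [f f_loc] := Cr_local_coloring r n VH EH VH0.
apply/Cr_min/asboolP; exists (stacked_coloring (Cr r n VH EH) #|VH| f).
exact: local_coloring_stacked rT sub_TH VT0 le_Hn f_loc.
Qed.
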